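(* Let $\mathcal{K}=\langle\mathcal{O},\mathcal{P}\rangle$ be a DL-safe hybrid knowledge base whose rules contain no function symbols, and let $\mathrm{lfp}(\mathrm{IFP}_{\mathcal{K}})=\langle I_T,I_F\rangle$ be its iterated fixpoint semantics. Then $\langle I_T,\ \mathrm{KA}(\mathcal{K})\setminus I_F\rangle$ is the alternating fixpoint partition $(P_\omega,N_\omega)$ of $\mathcal{K}$.
   Context: A hybrid knowledge base is a pair $\mathcal{K}=\langle\mathcal{O},\mathcal{P}\rangle$ where $\mathcal{O}$ is a set of description logic axioms (e.g. $\mathcal{ALC}$) and $\mathcal{P}$ is a finite set of normal rules $h\leftarrow a_1,\dots,a_n,\mathit{not}\,b_1,\dots,\mathit{not}\,b_r$. An atom in $\mathcal{P}$ is a DL-atom if its predicate occurs in $\mathcal{O}$; a rule is DL-safe if each of its variables occurs in some positive non-DL-atom of its body; $\mathcal{K}$ is DL-safe if all rules are. The grounding of $\mathcal{P}$ replaces variables by ground terms of $\mathcal{K}$ in all possible ways (here only constants, so it is finite). $\mathrm{KA}(\mathcal{K})$ is the set of ground atoms occurring in the grounding of $\mathcal{P}$. $\pi(\mathcal{O})$ is the standard first-order translation of the DL axioms and $O_{\mathcal{K},S}=\{\pi(\mathcal{O})\}\cup S$ for $S\subseteq\mathrm{KA}(\mathcal{K})$; $\models$ is first-order entailment. Iterated fixpoint semantics: a 3-valued interpretation is a pair $\langle I_T,I_F\rangle$ of disjoint subsets of $\mathrm{KA}(\mathcal{K})$ ($a$ true if $a\in I_T$, false if $a\in I_F$), ordered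 by $\langle I_T,I_F\rangle\le\langle I_T',I_F'\rangle$ iff $I_T\subseteq I_T'$ and $I_F\subseteq I_F'$. For $\mathcal{I}=\langle I_T,I_F\rangle$: $T^{\mathcal{K}}_{\mathcal{I}}(Tr)=\{a\in\mathrm{KA}(\mathcal{K})\mid$ some clause $a\leftarrow a_1,\dots,a_n,\mathit{not}\,b_1,\dots,\mathit{not}\,b_r$ of the grounding of $\mathcal{P}$ has each $a_i$ true in $\mathcal{I}$ or in $Tr$ and each $b_j$ false in $\mathcal{I}\}\cup\{a\in\mathrm{KA}(\mathcal{K})\mid O_{\mathcal{K},I_T\cup Tr}\models a\}$; $F^{\mathcal{K}}_{\mathcal{I}}(Fa)=\{a\in\mathrm{KA}(\mathcal{K})\mid O_{\mathcal{K},I_T}\models\neg a$, or for every clause $a\leftarrow a_1,\dots,a_n,\mathit{not}\,b_1,\dots,\mathit{not}\,b_r$ of the grounding of $\mathcal{P}$ some $a_i$ is false in $\mathcal{I}$ or in $Fa$, or some $b_j$ is true in $\mathcal{I}\}\cap\{a\in\mathrm{KA}(\mathcal{K})\mid O_{\mathcal{K},\mathrm{KA}(\mathcal{K})\setminus(I_F\cup Fa)}\not\models a\}$. These are monotonic; $\mathrm{IFP}_{\mathcal{K}}(\mathcal{I})=\langle\mathrm{lfp}(T^{\mathcal{K}}_{\mathcal{I}}),\mathrm{gfp}(F^{\mathcal{K}}_{\mathcal{I}})\rangle$ is monotonic w.r.t. $\le$, and the iterated fixpoint semantics is its least fixpoint $\mathrm{lfp}(\mathrm{IFP}_{\mathcal{K}})$.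 Alternating fixpoint partition (for the ground $\mathcal{K}$): for a positive (negation-free) ground $\mathcal{K}'=\langle\mathcal{O},\mathcal{P}'\rangle$ and $S\subseteq\mathrm{KA}(\mathcal{K})$, $R_{\mathcal{K}'}(S)$ is the set of heads of rules of $\mathcal{P}'$ whose body atoms all lie in $S$, $D_{\mathcal{K}'}(S)=\{a\in\mathrm{KA}(\mathcal{K})\mid O_{\mathcal{K},S}\models a\}$, and $T_{\mathcal{K}'}(S)=R_{\mathcal{K}'}(S)\cup D_{\mathcal{K}'}(S)$ (monotonic). For $S\subseteq\mathrm{KA}(\mathcal{K})$: $\mathcal{K}/S=\langle\mathcal{O},\mathcal{P}/S\rangle$ where $\mathcal{P}/S$ contains $h\leftarrow a_1,\dots,a_n$ for each ground rule $h\leftarrow a_1,\dots,a_n,\mathit{not}\,b_1,\dots,\mathit{not}\,b_r$ with $\{b_1,\dots,b_r\}\cap S=\emptyset$; $\mathcal{K}//S=\langle\mathcal{O},\mathcal{P}//S\rangle$ where $\mathcal{P}//S$ contains $h\leftarrow a_1,\dots,a_n$ for each such ground rule with $\{b_1,\dots,b_r\}\cap S=\emptyset$ and $O_{\mathcal{K},S}\not\models\neg h$. Let $\Gamma_{\mathcal{K}}(S)=\mathrm{lfp}(T_{\mathcal{K}/S})$ and $\Gamma'_{\mathcal{K}}(S)=\mathrm{lfp}(T_{\mathcal{K}//S})$. Define $P_0=\emptyset$, $N_0=\mathrm{KA}(\mathcal{K})$, $P_{n+1}=\Gamma_{\mathcal{K}}(N_n)$, $N_{n+1}=\Gamma'_{\mathcal{K}}(P_n)$,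 $P_\omega=\bigcup_i P_i$, $N_\omega=\bigcap_i N_i$. The pair $(P_\omega,N_\omega)$ is the alternating fixpoint partition of $\mathcal{K}$. *)

From Stdlib Require Import List.
Import ListNotations.

Section HybridKB.
Context {V C P : Type}.
(* V : variables, C : constants, P : predicate symbols (concept names and
   role names of O are predicate symbols as well). *)

Inductive term := TVar (x : V) | TCst (c : C).
Record atom := mkAtom { apred : P; aargs : list term }.
Record rule := mkRule { rhead : atom; rpos : list atom; rneg : list atom }.

Inductive concept :=
| CTop | CBot | CName (A : P) | CNot (c : concept)
| CAnd (c d : concept) | COr (c d : concept)
| CEx (r : P) (c : concept) | CAll (r : P) (c : concept).

Inductive axiom :=
| AIncl (c d : concept)
| ACAss (c : concept) (a : C)
| ARAss (r : P) (a b : C).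

Record kb := mkKB { kb_onto : list axiom; kb_rules : list rule }.

Record gatom := mkG { gpred : P; gargs : list C }.
Record grule := mkGR { ghead : gatom; gpos : list gatom; gneg : list gatom }.

Definition aset := gatom -> Prop.

Fixpoint concept_preds (c : concept) : list P :=
  match c with
  | CTop | CBot => []
  | CName A => [A]
  | CNot c => concept_preds c
  | CAnd c d | COr c d => concept_preds c ++ concept_preds d
  | CEx r c | CAll r c => r :: concept_preds c
  end.

Definition axiom_preds (ax : axiom) : list P :=
  match ax with
  | AIncl c d => concept_preds c ++ concept_preds d
  | ACAss c _ => concept_preds c
  | ARAss r _ _ => [r]
  end.

Definition dl_pred (K : kb) (p : P) : Prop :=
  exists ax, In ax (kb_onto K) /\ In p (axiom_preds ax).

Definition dl_atom (K : kb) (a : atom) : Prop := dl_pred K (apred a).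

Definition rule_atoms (r : rule) : list atom := rhead r :: rpos r ++ rneg r.

Definition var_in_atom (x : V) (a : atom) : Prop := In (TVar x) (aargs a).

Definition var_in_rule (x : V) (r : rule) : Prop :=
  exists a, In a (rule_atoms r) /\ var_in_atom x a.

Definition dl_safe_rule (K : kb) (r : rule) : Prop :=
  forall x, var_in_rule x r ->
    exists a, In a (rpos r) /\ ~ dl_atom K a /\ var_in_atom x a.

Definition dl_safe (K : kb) : Prop :=
  forall r, In r (kb_rules K) -> dl_safe_rule K r.

Definition term_consts (t : term) : list C :=
  match t with TVar _ => [] | TCst c => [c] end.
Definition atom_consts (a : atom) : list C := flat_map term_consts (aargs a).
Definition rule_consts (r : rule) : list C := flat_map atom_consts (rule_atoms r).
Definition axiom_consts (ax : axiom) : list C :=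
  match ax with AIncl _ _ => [] | ACAss _ a => [a] | ARAss _ a b => [a; b] end.
Definition kb_consts (K : kb) : list C :=
  flat_map axiom_consts (kb_onto K) ++ flat_map rule_consts (kb_rules K).

Definition ground_term (th : V -> C) (t : term) : C :=
  match t with TVar x => th x | TCst c => c end.
Definition ground_atom (th : V -> C) (a : atom) : gatom :=
  mkG (apred a) (map (ground_term th) (aargs a)).
Definition ground_rule (th : V -> C) (r : rule) : grule :=
  mkGR (ground_atom th (rhead r)) (map (ground_atom th) (rpos r))
       (map (ground_atom th) (rneg r)).

Definition is_ground_rule (K : kb) (g : grule) : Prop :=
  exists r th, In r (kb_rules K) /\
    (forall x, var_in_rule x r -> In (th x) (kb_consts K)) /\
    g = ground_rule th r.

Definition KA (K : kb) : aset := fun a =>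
  exists g, is_ground_rule K g /\ In a (ghead g :: gpos g ++ gneg g).

(* ---------- first-order semantics (= semantics of pi(O)) ---------- *)
Record interp := mkInterp {
  dom : Type;
  dom_inh : inhabited dom;
  ic : C -> dom;
  ip : P -> list dom -> Prop }.

Fixpoint cext (I : interp) (c : concept) : dom I -> Prop :=
  match c with
  | CTop => fun _ => True
  | CBot => fun _ => False
  | CName A => fun x => ip I A [x]
  | CNot c => fun x => ~ cext I c x
  | CAnd c d => fun x => cext I c x /\ cext I d x
  | COr c d => fun x => cext I c x \/ cext I d x
  | CEx r c => fun x => exists y, ip I r [x; y] /\ cext I c y
  | CAll r c => fun x => forall y, ip I r [x; y] -> cext I c y
  end.

Definition sat_axiom (I : interp) (ax : axiom) : Prop :=
  match ax with
  | AIncl c d => forall x, cext I c x -> cext I d x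
  | ACAss c a => cext I c (ic I a)
  | ARAss r a b => ip I r [ic I a; ic I b]
  end.

Definition sat_gatom (I : interp) (a : gatom) : Prop :=
  ip I (gpred a) (map (ic I) (gargs a)).

Definition model_of (K : kb) (S : aset) (I : interp) : Prop :=
  (forall ax, In ax (kb_onto K) -> sat_axiom I ax) /\
  (forall b, S b -> sat_gatom I b).

Definition entails (K : kb) (S : aset) (a : gatom) : Prop :=
  forall I, model_of K S I -> sat_gatom I a.
Definition entails_neg (K : kb) (S : aset) (a : gatom) : Prop :=
  forall I, model_of K S I -> ~ sat_gatom I a.

Definition subset (X Y : aset) : Prop := forall a, X a -> Y a.
Definition same_set (X Y : aset) : Prop := forall a, X a <-> Y a.

Definition lfp_in (U : aset) (f : aset -> aset) : aset := fun a =>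
  U a /\ forall X, subset X U -> subset (f X) X -> X a.
Definition gfp_in (U : aset) (f : aset -> aset) : aset := fun a =>
  exists X, subset X U /\ subset X (f X) /\ X a.

Definition TI (K : kb) (IT IF : aset) (Tr : aset) : aset := fun a =>
  KA K a /\
  ((exists g, is_ground_rule K g /\ ghead g = a /\
      (forall b, In b (gpos g) -> IT b \/ Tr b) /\
      (forall b, In b (gneg g) -> IF b))
   \/ entails K (fun b => IT b \/ Tr b) a).

Definition FI (K : kb) (IT IF : aset) (Fa : aset) : aset := fun a =>
  KA K a /\
  (entails_neg K IT a \/
   (forall g, is_ground_rule K g -> ghead g = a ->
      (exists b, In b (gpos g) /\ (IF b \/ Fa b)) \/
      (exists b, In b (gneg g) /\ IT b))) /\
  ~ entails K (fun b => KA K b /\ ~ (IF b \/ Fa b)) a.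

Definition IFP (K : kb) (IT IF : aset) : aset * aset :=
  (lfp_in (KA K) (TI K IT IF), gfp_in (KA K) (FI K IT IF)).

Definition is_3interp (K : kb) (IT IF : aset) : Prop :=
  subset IT (KA K) /\ subset IF (KA K) /\ (forall a, ~ (IT a /\ IF a)).

Definition IFP_fixpoint (K : kb) (IT IF : aset) : Prop :=
  same_set (fst (IFP K IT IF)) IT /\ same_set (snd (IFP K IT IF)) IF.

Definition is_lfp_IFP (K : kb) (IT IF : aset) : Prop :=
  is_3interp K IT IF /\ IFP_fixpoint K IT IF /\
  (forall JT JF, is_3interp K JT JF -> IFP_fixpoint K JT JF ->
     subset IT JT /\ subset IF JF).

(* positive ground programs: sets of rules h <- body *)
Definition pprog := gatom -> list gatom -> Prop.

Definition Rop (Pp : pprog) (S : aset) : aset := fun h =>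
  exists body, Pp h body /\ forall b, In b body -> S b.
Definition Dop (K : kb) (S : aset) : aset := fun a => KA K a /\ entails K S a.
Definition Top (K : kb) (Pp : pprog) (S : aset) : aset := fun a =>
  Rop Pp S a \/ Dop K S a.

Definition reduct (K : kb) (S : aset) : pprog := fun h body =>
  exists g, is_ground_rule K g /\ ghead g = h /\ gpos g = body /\
    (forall b, In b (gneg g) -> ~ S b).
Definition reduct2 (K : kb) (S : aset) : pprog := fun h body =>
  exists g, is_ground_rule K g /\ ghead g = h /\ gpos g = body /\
    (forall b, In b (gneg g) -> ~ S b) /\ ~ entails_neg K S h.

Definition Gamma (K : kb) (S : aset) : aset := lfp_in (KA K) (Top K (reduct K S)).
Definition Gamma' (K : kb) (S : aset) : aset := lfp_in (KA K) (Top K (reduct2 K S)).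

Fixpoint PN (K : kb) (n : nat) : aset * aset :=
  match n with
  | O => (fun _ => False, KA K)
  | S n' => (Gamma K (snd (PN K n')), Gamma' K (fst (PN K n')))
  end.

Definition Pomega (K : kb) : aset := fun a => exists n, fst (PN K n) a.
Definition Nomega (K : kb) : aset := fun a => forall n, snd (PN K n) a.

End HybridKB.

(* Every fixpoint <IT, IF> of IFP_K is sandwiched by the alternating sequence:
   Gamma_K(KA \ IF) ⊆ IT and KA \ IF ⊆ Gamma'_K(IT), so by induction P_n ⊆ IT
   and KA \ IF ⊆ N_n for all n.  Since KA(K) is finite, (P_n) and (N_n)
   stabilise, whence P_ω = Gamma_K(N_ω) and N_ω = Gamma'_K(P_ω); from these two
   equations <P_ω, KA \ N_ω> is itself a fixpoint of IFP_K.  Minimality of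
   <IT, IF> closes the sandwich. *)
From Stdlib Require Import List Classical Arith Lia.
Import ListNotations.

Section Fixpoints.
Context {C P : Type}.
Variable U : @aset C P.

Lemma lfp_in_sub f : subset (lfp_in U f) U.
Proof. intros a [Ha _]; exact Ha. Qed.

Lemma lfp_in_least f X : subset X U -> subset (f X) X -> subset (lfp_in U f) X.
Proof. intros HXU HfX a [_ Ha]; apply Ha; assumption. Qed.

Lemma lfp_in_le f g :
  (forall X, subset X U -> subset (f X) (g X)) -> subset (lfp_in U f) (lfp_in U g).
Proof.
  intros Hfg a [HUa Ha]; split; [exact HUa|].
  intros X HXU HgX; apply Ha; [exact HXU|].
  intros b Hb; apply HgX, Hfg; assumption.
Qed.

Lemma lfp_in_prefixed f :
  (forall X Y, subset X Y -> subset (f X) (f Y)) -> (forall X, subset (f X) U) ->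
  subset (f (lfp_in U f)) (lfp_in U f).
Proof.
  intros Hmono HfU a Ha; split; [exact (HfU _ _ Ha)|].
  intros X HXU HfX; apply HfX.
  eapply Hmono; [apply lfp_in_least|]; eassumption.
Qed.

End Fixpoints.

Section Chains.
Variable A : Type.
Variable X : nat -> A -> Prop.
Hypothesis X_step : forall n a, X n a -> X (S n) a.

Lemma chain_le n m : n <= m -> forall a, X n a -> X m a.
Proof. induction 1; auto. Qed.

Lemma chain_bound_on_list (L : list A) :
  exists M, forall a, In a L -> (exists k, X k a) -> X M a.
Proof.
  induction L as [|c L [M HM]]; [exists 0; intros a []|].
  destruct (classic (exists k, X k c)) as [[k Hk]|Hc].
  - exists (max M k); intros a [<-|Ha] Hex.
    + apply (chain_le k); [lia|exact Hk].
    + apply (chain_le M); [lia|auto].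
  - exists M; intros a [<-|Ha] Hex; [contradiction|auto].
Qed.

Lemma chain_finite_stabilizes (L : list A) :
  (forall n a, X n a -> In a L) ->
  exists M, forall m, M <= m -> forall n a, X n a -> X m a.
Proof.
  intros HL; destruct (chain_bound_on_list L) as [M HM].
  exists M; intros m HMm n a Ha.
  apply (chain_le M); [exact HMm|].
  apply HM; [exact (HL n a Ha)|exists n; exact Ha].
Qed.

End Chains.

Fixpoint lists_over {A : Type} (D : list A) (n : nat) : list (list A) :=
  match n with
  | 0 => [[]]
  | S n => flat_map (fun x => map (cons x) (lists_over D n)) D
  end.

Lemma in_lists_over {A : Type} (D : list A) (l : list A) :
  (forall x, In x l -> In x D) -> In l (lists_over D (length l)).
Proof.
  induction l as [|y l IH]; intros HlD; simpl; [left; reflexivity|].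
  apply in_flat_map; exists y; split; [apply HlD; left; reflexivity|].
  apply in_map, IH; intros x Hx; apply HlD; right; exact Hx.
Qed.

Section KnowledgeBase.
Context {V C P : Type}.
Variable K : @kb V C P.

Definition KA_diff (S : @aset C P) : aset := fun a => KA K a /\ ~ S a.

Lemma KA_diff_diff S : subset (KA_diff (KA_diff S)) S.
Proof. intros a [Ha HnS]; apply NNPP; intro Hn; apply HnS; split; assumption. Qed.

Lemma KA_ghead g : is_ground_rule K g -> KA K (ghead g).
Proof. intros Hg; exists g; split; [exact Hg|left; reflexivity]. Qed.

Lemma KA_gpos g b : is_ground_rule K g -> In b (gpos g) -> KA K b.
Proof. intros Hg Hb; exists g; split; [exact Hg|right; apply in_or_app; auto]. Qed.

Lemma KA_gneg g b : is_ground_rule K g -> In b (gneg g) -> KA K b.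
Proof. intros Hg Hb; exists g; split; [exact Hg|right; apply in_or_app; auto]. Qed.

(* Groundings use constants of K only, so every atom of KA(K) is a predicate of
   some rule atom applied to a same-length list of constants of K. *)
Definition KA_list : list (@gatom C P) :=
  flat_map (fun r => flat_map (fun b => map (mkG (apred b))
     (lists_over (kb_consts K) (length (aargs b)))) (rule_atoms r)) (kb_rules K).

Lemma in_rule_consts r c b :
  In r (kb_rules K) -> In b (rule_atoms r) -> In (TCst c) (aargs b) ->
  In c (kb_consts K).
Proof.
  intros Hr Hb Hc; apply in_or_app; right.
  apply in_flat_map; exists r; split; [exact Hr|].
  apply in_flat_map; exists b; split; [exact Hb|].
  apply in_flat_map; exists (TCst c); split; [exact Hc|left; reflexivity].
Qed.

Lemma KA_in_list a : KA K a -> In a KA_list.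
Proof.
  intros [g [[r [th [Hr [Hth ->]]]] Hin]].
  assert (Hmap : In a (map (ground_atom th) (rule_atoms r))).
  { unfold rule_atoms; simpl in *; rewrite map_app; exact Hin. }
  apply in_map_iff in Hmap; destruct Hmap as [b [<- Hb]].
  apply in_flat_map; exists r; split; [exact Hr|].
  apply in_flat_map; exists b; split; [exact Hb|].
  unfold ground_atom; apply in_map.
  rewrite <- (length_map (ground_term th) (aargs b)).
  apply in_lists_over; intros x Hx.
  apply in_map_iff in Hx; destruct Hx as [[v|c] [<- Ht]]; simpl.
  - apply Hth; exists b; split; assumption.
  - exact (in_rule_consts r c b Hr Hb Ht).
Qed.

Lemma entails_mono X Y a : subset X Y -> entails K X a -> entails K Y a.
Proof. intros HXY He I [HO HY]; apply He; split; auto. Qed.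

Lemma entails_neg_mono X Y a : subset X Y -> entails_neg K X a -> entails_neg K Y a.
Proof. intros HXY He I [HO HY]; apply He; split; auto. Qed.

Lemma Top_mono Pp X Y : subset X Y -> subset (Top K Pp X) (Top K Pp Y).
Proof.
  intros HXY a [[body [Hp Hb]]|[Ha He]].
  - left; exists body; split; auto.
  - right; split; [exact Ha|eapply entails_mono; eassumption].
Qed.

Lemma Top_le (Pp Pp' : pprog) X :
  (forall h body, Pp h body -> Pp' h body) -> subset (Top K Pp X) (Top K Pp' X).
Proof.
  intros HPp a [[body [Hp Hb]]|HD]; [left; exists body; split; auto|right; exact HD].
Qed.

Lemma Top_sub_KA (Pp : pprog) X :
  (forall h body, Pp h body -> KA K h) -> subset (Top K Pp X) (KA K).
Proof. intros HPp a [[body [Hp _]]|[Ha _]]; eauto. Qed.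

Lemma Gamma_prefixed Q : subset (Top K (reduct K Q) (Gamma K Q)) (Gamma K Q).
Proof.
  apply lfp_in_prefixed; [intros X Y; apply Top_mono|].
  intros X; apply Top_sub_KA; intros h body [g [Hg [<- _]]]; apply KA_ghead, Hg.
Qed.

Lemma Gamma'_prefixed Q : subset (Top K (reduct2 K Q) (Gamma' K Q)) (Gamma' K Q).
Proof.
  apply lfp_in_prefixed; [intros X Y; apply Top_mono|].
  intros X; apply Top_sub_KA; intros h body [g [Hg [<- _]]]; apply KA_ghead, Hg.
Qed.

Lemma Gamma_antitone Q Q' : subset Q Q' -> subset (Gamma K Q') (Gamma K Q).
Proof.
  intros HQ; apply lfp_in_le; intros X _; apply Top_le.
  intros h body [g [Hg [Hh [Hb Hn]]]]; exists g; repeat split; auto.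
  intros c Hc HQc; exact (Hn c Hc (HQ c HQc)).
Qed.

Lemma Gamma'_antitone Q Q' : subset Q Q' -> subset (Gamma' K Q') (Gamma' K Q).
Proof.
  intros HQ; apply lfp_in_le; intros X _; apply Top_le.
  intros h body [g [Hg [Hh [Hb [Hn Hne]]]]]; exists g; repeat split; auto.
  - intros c Hc HQc; exact (Hn c Hc (HQ c HQc)).
  - intros He; apply Hne; eapply entails_neg_mono; eassumption.
Qed.

Lemma Gamma_sub_lfp_TI IT IF :
  subset (Gamma K (KA_diff IF)) (lfp_in (KA K) (TI K IT IF)).
Proof.
  apply lfp_in_le; intros X _ a [[body [[g [Hg [<- [<- Hn]]]] Hbody]]|[Ha He]].
  - split; [apply KA_ghead, Hg|left; exists g; repeat split; [exact Hg| |]].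
    + intros b Hb; right; exact (Hbody b Hb).
    + intros b Hb; apply NNPP; intros HIF.
      apply (Hn b Hb); split; [eapply KA_gneg|]; eassumption.
  - split; [exact Ha|right; eapply entails_mono; [|exact He]].
    intros b Hb; right; exact Hb.
Qed.

Lemma lfp_TI_sub_Gamma IT IF Q :
  subset IT (Gamma K Q) -> (forall a, IF a -> ~ Q a) ->
  subset (lfp_in (KA K) (TI K IT IF)) (Gamma K Q).
Proof.
  intros HIT HIF; apply lfp_in_least; [apply lfp_in_sub|].
  intros a [Ha [[g [Hg [<- [Hpos Hneg]]]]|He]]; apply Gamma_prefixed.
  - left; exists (gpos g); split.
    + exists g; repeat split; [exact Hg|]; intros b Hb; exact (HIF b (Hneg b Hb)).
    + intros b Hb; destruct (Hpos b Hb); auto.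
  - right; split; [exact Ha|eapply entails_mono; [|exact He]].
    intros b [Hb|Hb]; auto.
Qed.

(* KA \ Gamma'_K(Q) is a post-fixpoint of FI_<Q, IF>, whatever IF is. *)
Lemma KA_diff_Gamma'_sub_gfp_FI Q IF :
  subset (KA_diff (Gamma' K Q)) (gfp_in (KA K) (FI K Q IF)).
Proof.
  intros a Ha; exists (KA_diff (Gamma' K Q)); split; [intros b [Hb _]; exact Hb|].
  split; [|exact Ha].
  intros b [Hb HnG]; split; [exact Hb|split].
  - destruct (classic (entails_neg K Q b)) as [Hen|Hen]; [left; exact Hen|right].
    intros g Hg Hh.
    destruct (classic (exists c, In c (gneg g) /\ Q c)) as [Hneg|Hneg]; [right; exact Hneg|left].
    apply NNPP; intros Hpos; apply HnG, Gamma'_prefixed; left; exists (gpos g); split.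
    + exists g; repeat split; auto; intros c Hc HQc; apply Hneg; exists c; auto.
    + intros c Hc; apply NNPP; intros HnGc; apply Hpos; exists c; split; [exact Hc|].
      right; split; [eapply KA_gpos|]; eassumption.
  - intros He; apply HnG, Gamma'_prefixed; right; split; [exact Hb|].
    eapply entails_mono; [|exact He].
    intros c [Hc HnX]; apply NNPP; intros HnGc; apply HnX; right; split; assumption.
Qed.

Lemma gfp_FI_disjoint_Gamma' Q IF :
  (forall a, IF a -> ~ Gamma' K Q a) ->
  forall a, gfp_in (KA K) (FI K Q IF) a -> ~ Gamma' K Q a.
Proof.
  intros HIF a [X [HXK [HXFX HXa]]] HGa.
  assert (HGX : subset (Gamma' K Q) (fun b => Gamma' K Q b /\ ~ X b)).
  { apply lfp_in_least; [intros b [Hb _]; apply (lfp_in_sub _ _ _ Hb)|].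
    intros b HT; split.
    { apply Gamma'_prefixed; eapply Top_mono; [|exact HT]; intros c [Hc _]; exact Hc. }
    intros HXb; destruct (HXFX b HXb) as [_ [Hrules Hnent]].
    destruct HT as [[body [[g [Hg [Hh [<- [Hn Hne]]]]] Hbody]]|[_ He]].
    - destruct Hrules as [Hen|Hrules]; [contradiction|].
      destruct (Hrules g Hg Hh) as [[c [Hc [HIFc|HXc]]]|[c [Hc HQc]]].
      + exact (HIF c HIFc (proj1 (Hbody c Hc))).
      + exact (proj2 (Hbody c Hc) HXc).
      + exact (Hn c Hc HQc).
    - apply Hnent; eapply entails_mono; [|exact He].
      intros c [HGc HnXc]; split; [exact (lfp_in_sub _ _ _ HGc)|].
      intros [HIFc|HXc]; [exact (HIF c HIFc HGc)|exact (HnXc HXc)]. }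
  exact (proj2 (HGX a HGa) HXa).
Qed.

Lemma IFP_fixpoint_bounds_Gamma IT IF :
  IFP_fixpoint K IT IF ->
  subset (Gamma K (KA_diff IF)) IT /\ subset (KA_diff IF) (Gamma' K IT).
Proof.
  intros [HfixT HfixF]; split.
  - intros a Ha; exact (proj1 (HfixT a) (Gamma_sub_lfp_TI IT IF a Ha)).
  - intros a [Ha HnIF]; apply NNPP; intros HnG; apply HnIF, HfixF.
    apply KA_diff_Gamma'_sub_gfp_FI; split; assumption.
Qed.

Lemma IFP_fixpoint_bounds_PN IT IF :
  IFP_fixpoint K IT IF ->
  forall n, subset (fst (PN K n)) IT /\ subset (KA_diff IF) (snd (PN K n)).
Proof.
  intros Hfix; destruct (IFP_fixpoint_bounds_Gamma _ _ Hfix) as [HGamma HGamma'].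
  induction n as [|n [HP HN]]; simpl.
  - split; [intros a []|intros a [Ha _]; exact Ha].
  - split.
    + intros a Ha; apply HGamma; eapply Gamma_antitone; eassumption.
    + intros a Ha; eapply Gamma'_antitone; [exact HP|apply HGamma', Ha].
Qed.

Lemma alternating_pair_IFP_fixpoint Pw Nw :
  same_set (Gamma K Nw) Pw -> same_set (Gamma' K Pw) Nw -> subset Pw Nw ->
  is_3interp K Pw (KA_diff Nw) /\ IFP_fixpoint K Pw (KA_diff Nw).
Proof.
  intros HP HN HPN.
  assert (HPG : subset Pw (Gamma K Nw)) by (intros a; apply HP).
  assert (HNG : subset Nw (Gamma' K Pw)) by (intros a; apply HN).
  split; [split; [|split]|split; intros a; split].
  - intros a Ha; exact (lfp_in_sub _ _ _ (HPG a Ha)).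
  - intros a [Ha _]; exact Ha.
  - intros a [HPa [_ HnN]]; exact (HnN (HPN a HPa)).
  - intros Ha; apply (proj1 (HP a)).
    exact (lfp_TI_sub_Gamma Pw (KA_diff Nw) Nw HPG (fun b HNb => proj2 HNb) a Ha).
  - intros HPa.
    exact (Gamma_sub_lfp_TI Pw (KA_diff Nw) a
             (Gamma_antitone _ _ (KA_diff_diff Nw) a (HPG a HPa))).
  - intros Ha; split; [destruct Ha as [X [HXK [_ HXa]]]; exact (HXK a HXa)|].
    intros HNa; refine (gfp_FI_disjoint_Gamma' Pw (KA_diff Nw) _ a Ha (HNG a HNa)).
    intros b [_ HnN] HGb; exact (HnN (proj1 (HN b) HGb)).
  - intros [Ha HnN]; apply KA_diff_Gamma'_sub_gfp_FI.
    split; [exact Ha|intros HGa; exact (HnN (proj1 (HN a) HGa))].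
Qed.

Lemma PN_step n :
  subset (fst (PN K n)) (fst (PN K (S n))) /\ subset (snd (PN K (S n))) (snd (PN K n)).
Proof.
  induction n as [|n [HP HN]]; simpl.
  - split; [intros a []|apply lfp_in_sub].
  - split; [apply Gamma_antitone, HN|apply Gamma'_antitone, HP].
Qed.

Lemma PN_snd_sub_KA n : subset (snd (PN K n)) (KA K).
Proof. destruct n; simpl; [intros a Ha; exact Ha|apply lfp_in_sub]. Qed.

Lemma PN_fst_sub_KA n : subset (fst (PN K n)) (KA K).
Proof. destruct n; simpl; [intros a []|apply lfp_in_sub]. Qed.

Lemma PN_stabilizes :
  exists M, subset (Pomega K) (fst (PN K M)) /\ subset (snd (PN K M)) (Nomega K).
Proof.
  destruct (chain_finite_stabilizes _ (fun n => fst (PN K n))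
              (fun n => proj1 (PN_step n)) KA_list) as [M1 HM1].
  { intros n a Ha; apply KA_in_list, (PN_fst_sub_KA n), Ha. }
  assert (Hdiff_step : forall n a,
             KA_diff (snd (PN K n)) a -> KA_diff (snd (PN K (S n))) a).
  { intros n a [Ha HnN]; split; [exact Ha|intros HN; exact (HnN (proj2 (PN_step n) a HN))]. }
  destruct (chain_finite_stabilizes _ _ Hdiff_step KA_list) as [M2 HM2].
  { intros n a [Ha _]; apply KA_in_list, Ha. }
  exists (max M1 M2); split.
  - intros a [n Ha]; exact (HM1 _ (Nat.le_max_l _ _) n a Ha).
  - intros a HNa n; apply NNPP; intros HnN.
    assert (Ha : KA K a) by exact (PN_snd_sub_KA _ a HNa).
    exact (proj2 (HM2 _ (Nat.le_max_r _ _) n a (conj Ha HnN)) HNa).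
Qed.

Lemma Gamma_Nomega : same_set (Gamma K (Nomega K)) (Pomega K).
Proof.
  destruct PN_stabilizes as [M [_ HNM]]; intros a; split.
  - intros Ha; exists (S M); exact (Gamma_antitone _ _ HNM a Ha).
  - intros [n Ha]; apply (proj1 (PN_step n)) in Ha; simpl in Ha.
    eapply Gamma_antitone; [|exact Ha]; intros b Hb; exact (Hb n).
Qed.

Lemma Gamma'_Pomega : same_set (Gamma' K (Pomega K)) (Nomega K).
Proof.
  destruct PN_stabilizes as [M [HPM _]]; intros a; split.
  - intros Ha [|n]; simpl; [exact (lfp_in_sub _ _ _ Ha)|].
    eapply Gamma'_antitone; [|exact Ha]; intros b Hb; exists n; exact Hb.
  - intros Ha; exact (Gamma'_antitone _ _ HPM a (Ha (S M))).
Qed.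

End KnowledgeBase.

Theorem theorem1 (V C P : Type) (K : @kb V C P) (IT IF : @gatom C P -> Prop) :
  dl_safe K ->
  is_lfp_IFP K IT IF ->
  (forall a, IT a <-> Pomega K a) /\
  (forall a, (KA K a /\ ~ IF a) <-> Nomega K a).
Proof.
  intros _ [[HITK [_ Hdisj]] [Hfix Hleast]].
  pose proof (IFP_fixpoint_bounds_PN K _ _ Hfix) as Hbound.
  assert (HPN : subset (Pomega K) (Nomega K)).
  { intros a [n Ha] m; apply (proj2 (Hbound m)).
    apply (proj1 (Hbound n)) in Ha.
    split; [exact (HITK a Ha)|intros HIF; exact (Hdisj a (conj Ha HIF))]. }
  destruct (alternating_pair_IFP_fixpoint K _ _ (Gamma_Nomega K) (Gamma'_Pomega K) HPN)
    as [Hinterp Hfix'].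
  destruct (Hleast _ _ Hinterp Hfix') as [HIT HIF].
  split; intros a; split.
  - apply HIT.
  - intros [n Ha]; exact (proj1 (Hbound n) a Ha).
  - intros Ha n; exact (proj2 (Hbound n) a Ha).
  - intros HNa; split; [exact (HNa 0)|intros HIFa; exact (proj2 (HIF a HIFa) HNa)].
Qed.
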